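(* Let $\rho_0\in(0,\pi/2)$ and $Q\in SO_3(\mathbb R)$. If $\bar L_i>\bar D_j$ for all $i,j\in\{1,2\}$, then $\bar L_1=\bar L_2$. If $\bar D_i>\bar L_j$ for all $i,j\in\{1,2\}$, then $\bar D_1=\bar D_2$.
   Context: $d$ is the spherical distance on the unit sphere $\mathbb S^2\subset\mathbb R^3$. $p_1=(\cos\rho_0,0,\sin\rho_0)$, $p_2=(\cos\rho_0,0,-\sin\rho_0)$, $q_1=Qp_1$, $q_2=Qp_2$; $L_1=d(p_1,q_1)$, $L_2=d(p_2,q_2)$, $D_1=d(p_1,q_2)$, $D_2=d(p_2,q_1)$; $\bar L_i=2\lceil L_i/(4\rho_0)\rceil-3$ and $\bar D_i=2\lceil D_i/(4\rho_0)-1/2\rceil-2$ for $i=1,2$. *)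

From Stdlib Require Import Reals ZArith.
Open Scope R_scope.

Record vec3 := V3 { vx : R; vy : R; vz : R }.

Definition dot (u v : vec3) : R := vx u * vx v + vy u * vy v + vz u * vz v.

Definition sdist (u v : vec3) : R := acos (dot u v).

(* 3x3 real matrices, given by their 9 entries: row i, column j (0 <= i,j <= 2). *)
Definition mat3 := nat -> nat -> R.

Definition mulv (Q : mat3) (v : vec3) : vec3 :=
  V3 (Q 0%nat 0%nat * vx v + Q 0%nat 1%nat * vy v + Q 0%nat 2%nat * vz v)
     (Q 1%nat 0%nat * vx v + Q 1%nat 1%nat * vy v + Q 1%nat 2%nat * vz v)
     (Q 2%nat 0%nat * vx v + Q 2%nat 1%nat * vy v + Q 2%nat 2%nat * vz v).

Definition det3 (Q : mat3) : R :=
    Q 0%nat 0%nat * (Q 1%nat 1%nat * Q 2%nat 2%nat - Q 1%nat 2%nat * Q 2%nat 1%nat)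
  - Q 0%nat 1%nat * (Q 1%nat 0%nat * Q 2%nat 2%nat - Q 1%nat 2%nat * Q 2%nat 0%nat)
  + Q 0%nat 2%nat * (Q 1%nat 0%nat * Q 2%nat 1%nat - Q 1%nat 1%nat * Q 2%nat 0%nat).

Definition orthogonal3 (Q : mat3) : Prop :=
  forall i j : nat, (i < 3)%nat -> (j < 3)%nat ->
    Q 0%nat i * Q 0%nat j + Q 1%nat i * Q 1%nat j + Q 2%nat i * Q 2%nat j
    = if Nat.eqb i j then 1 else 0.

Definition SO3 (Q : mat3) : Prop := orthogonal3 Q /\ det3 Q = 1.

Definition ceilR (x : R) : Z := (- Int_part (- x))%Z.

Definition p1 (rho0 : R) : vec3 := V3 (cos rho0) 0 (sin rho0).
Definition p2 (rho0 : R) : vec3 := V3 (cos rho0) 0 (- sin rho0).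

Definition L1 rho0 Q := sdist (p1 rho0) (mulv Q (p1 rho0)).
Definition L2 rho0 Q := sdist (p2 rho0) (mulv Q (p2 rho0)).
Definition D1 rho0 Q := sdist (p1 rho0) (mulv Q (p2 rho0)).
Definition D2 rho0 Q := sdist (p2 rho0) (mulv Q (p1 rho0)).

Definition barL (rho0 L : R) : Z := (2 * ceilR (L / (4 * rho0)) - 3)%Z.
Definition barD (rho0 D : R) : Z := (2 * ceilR (D / (4 * rho0) - 1 / 2) - 2)%Z.

From Stdlib Require Import Reals ZArith Lra Lia Psatz.
Open Scope R_scope.

(* Since Q is an isometry of the sphere, d(q1, q2) = d(p1, p2) = 2 rho0, so by the
   triangle inequality each L_i differs from each D_j by at most 2 rho0.  For such a
   pair the two rounding formulas are off by exactly one step: \bar D_j = \bar L_i +- 1.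
   Hence if every \bar L_i exceeds every \bar D_j, then \bar L_1 = \bar D_1 + 1 = \bar L_2,
   and symmetrically for the D's. *)

Lemma dot_sym (u v : vec3) : dot u v = dot v u.
Proof. unfold dot; ring. Qed.

Lemma sdist_sym (u v : vec3) : sdist u v = sdist v u.
Proof. unfold sdist; rewrite dot_sym; reflexivity. Qed.

Lemma Cauchy_Schwarz_dot (u v : vec3) : (dot u v) ^ 2 <= dot u u * dot v v.
Proof.
  destruct u as [a b c], v as [d e f]; unfold dot; simpl.
  assert (Lagrange : (a*a + b*b + c*c) * (d*d + e*e + f*f) - (a*d + b*e + c*f) ^ 2
                     = (a*e - b*d) ^ 2 + (a*f - c*d) ^ 2 + (b*f - c*e) ^ 2) by ring.
  pose proof (pow2_ge_0 (a*e - b*d)); pose proof (pow2_ge_0 (a*f - c*d));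
    pose proof (pow2_ge_0 (b*f - c*e)).
  lra.
Qed.

Lemma dot_unit_bound (u v : vec3) :
  dot u u = 1 -> dot v v = 1 -> -1 <= dot u v <= 1.
Proof. intros Hu Hv; pose proof (Cauchy_Schwarz_dot u v) as H; rewrite Hu, Hv in H; nra. Qed.

Lemma sdist_triangle (x y z : vec3) :
  dot x x = 1 -> dot y y = 1 -> dot z z = 1 ->
  sdist x z <= sdist x y + sdist y z.
Proof.
  intros Hx Hy Hz; unfold sdist.
  set (c1 := dot x y); set (c2 := dot y z); set (c3 := dot x z).
  assert (B1 : -1 <= c1 <= 1) by (apply dot_unit_bound; auto).
  assert (B2 : -1 <= c2 <= 1) by (apply dot_unit_bound; auto).
  assert (B3 : -1 <= c3 <= 1) by (apply dot_unit_bound; auto).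
  pose proof (acos_bound c1); pose proof (acos_bound c2); pose proof (acos_bound c3).
  destruct (Rle_dec PI (acos c1 + acos c2)) as [Hpi | Hpi]; [lra |].
  apply Rnot_le_lt in Hpi.
  (* Cauchy-Schwarz for the components of x and z orthogonal to y. *)
  set (u := V3 (vx x - c1 * vx y) (vy x - c1 * vy y) (vz x - c1 * vz y)).
  set (w := V3 (vx z - c2 * vx y) (vy z - c2 * vy y) (vz z - c2 * vz y)).
  assert (Euw : dot u w = c3 - c1 * c2).
  { transitivity (c3 - 2 * c1 * c2 + c1 * c2 * dot y y);
      [unfold u, w, c1, c2, c3, dot; simpl; ring | rewrite Hy; ring]. }
  assert (Euu : dot u u = 1 - c1 ^ 2).
  { transitivity (dot x x - 2 * c1 * c1 + c1 * c1 * dot y y);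
      [unfold u, c1, dot; simpl; ring | rewrite Hx, Hy; ring]. }
  assert (Eww : dot w w = 1 - c2 ^ 2).
  { transitivity (dot z z - 2 * c2 * c2 + c2 * c2 * dot y y);
      [unfold w, c2, dot; simpl; ring | rewrite Hz, Hy; ring]. }
  pose proof (Cauchy_Schwarz_dot u w) as CS; rewrite Euw, Euu, Eww in CS.
  assert (Hsines : c1 * c2 - c3 <= sqrt (1 - c1²) * sqrt (1 - c2²)).
  { rewrite <- sqrt_mult by (unfold Rsqr; nra).
    apply Rle_trans with (Rabs (c3 - c1 * c2));
      [rewrite <- Rabs_Ropp; apply Rle_trans with (2 := Rle_abs _); lra |].
    rewrite <- sqrt_Rsqr_abs; apply sqrt_le_1_alt; unfold Rsqr; nra. }
  assert (Hcos : cos (acos c1 + acos c2) <= c3).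
  { rewrite cos_plus, !cos_acos, !sin_acos by lra; lra. }
  destruct (Rle_dec (acos c3) (acos c1 + acos c2)) as [Hle | Hgt]; [exact Hle |].
  apply Rnot_le_lt in Hgt; exfalso.
  assert (c3 < cos (acos c1 + acos c2)).
  { rewrite <- (cos_acos c3) at 1 by lra; apply cos_decreasing_1; lra. }
  lra.
Qed.

Lemma sdist_reverse_triangle (x y z : vec3) :
  dot x x = 1 -> dot y y = 1 -> dot z z = 1 ->
  Rabs (sdist z x - sdist z y) <= sdist x y.
Proof.
  intros Hx Hy Hz; apply Rabs_le.
  pose proof (sdist_triangle z y x Hz Hy Hx); pose proof (sdist_triangle z x y Hz Hx Hy).
  rewrite (sdist_sym y x) in *; lra.
Qed.

Lemma dot_mulv_orthogonal (Q : mat3) (u v : vec3) :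
  orthogonal3 Q -> dot (mulv Q u) (mulv Q v) = dot u v.
Proof.
  intros HQ.
  pose proof (HQ 0 0 ltac:(lia) ltac:(lia))%nat as g00.
  pose proof (HQ 0 1 ltac:(lia) ltac:(lia))%nat as g01.
  pose proof (HQ 0 2 ltac:(lia) ltac:(lia))%nat as g02.
  pose proof (HQ 1 1 ltac:(lia) ltac:(lia))%nat as g11.
  pose proof (HQ 1 2 ltac:(lia) ltac:(lia))%nat as g12.
  pose proof (HQ 2 2 ltac:(lia) ltac:(lia))%nat as g22.
  simpl in g00, g01, g02, g11, g12, g22.
  destruct u as [a b c], v as [d e f]; unfold dot, mulv; simpl.
  set (q00 := Q 0%nat 0%nat) in *; set (q01 := Q 0%nat 1%nat) in *; set (q02 := Q 0%nat 2%nat) in *.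
  set (q10 := Q 1%nat 0%nat) in *; set (q11 := Q 1%nat 1%nat) in *; set (q12 := Q 1%nat 2%nat) in *.
  set (q20 := Q 2%nat 0%nat) in *; set (q21 := Q 2%nat 1%nat) in *; set (q22 := Q 2%nat 2%nat) in *.
  transitivity (a*d * (q00*q00 + q10*q10 + q20*q20) + (a*e + b*d) * (q00*q01 + q10*q11 + q20*q21)
    + (a*f + c*d) * (q00*q02 + q10*q12 + q20*q22) + b*e * (q01*q01 + q11*q11 + q21*q21)
    + (b*f + c*e) * (q01*q02 + q11*q12 + q21*q22) + c*f * (q02*q02 + q12*q12 + q22*q22));
    [ring |].
  rewrite g00, g01, g02, g11, g12, g22; ring.
Qed.

Lemma sdist_mulv_orthogonal (Q : mat3) (u v : vec3) :
  orthogonal3 Q -> sdist (mulv Q u) (mulv Q v) = sdist u v.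
Proof. intros HQ; unfold sdist; rewrite dot_mulv_orthogonal; auto. Qed.

Lemma dot_p1_p1 (rho0 : R) : dot (p1 rho0) (p1 rho0) = 1.
Proof. unfold p1, dot; simpl; pose proof (sin2_cos2 rho0); unfold Rsqr in *; lra. Qed.

Lemma dot_p2_p2 (rho0 : R) : dot (p2 rho0) (p2 rho0) = 1.
Proof. unfold p2, dot; simpl; pose proof (sin2_cos2 rho0); unfold Rsqr in *; lra. Qed.

Lemma sdist_p1_p2 (rho0 : R) : 0 < rho0 < PI / 2 -> sdist (p1 rho0) (p2 rho0) = 2 * rho0.
Proof.
  intros Hr; unfold sdist.
  replace (dot (p1 rho0) (p2 rho0)) with (cos (2 * rho0))
    by (unfold p1, p2, dot; simpl; rewrite cos_2a; ring).
  apply acos_cos; lra.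
Qed.

Lemma L_D_close (rho0 : R) (Q : mat3) : 0 < rho0 < PI / 2 -> orthogonal3 Q ->
  Rabs (L1 rho0 Q - D1 rho0 Q) <= 2 * rho0 /\ Rabs (L1 rho0 Q - D2 rho0 Q) <= 2 * rho0 /\
  Rabs (L2 rho0 Q - D1 rho0 Q) <= 2 * rho0 /\ Rabs (L2 rho0 Q - D2 rho0 Q) <= 2 * rho0.
Proof.
  intros Hr HQ; unfold L1, L2, D1, D2.
  set (x1 := p1 rho0); set (x2 := p2 rho0); set (y1 := mulv Q x1); set (y2 := mulv Q x2).
  assert (Ux1 : dot x1 x1 = 1) by apply dot_p1_p1.
  assert (Ux2 : dot x2 x2 = 1) by apply dot_p2_p2.
  assert (Uy1 : dot y1 y1 = 1) by (unfold y1; rewrite dot_mulv_orthogonal; auto).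
  assert (Uy2 : dot y2 y2 = 1) by (unfold y2; rewrite dot_mulv_orthogonal; auto).
  assert (Dx : sdist x1 x2 = 2 * rho0) by (apply sdist_p1_p2; auto).
  assert (Dy : sdist y1 y2 = 2 * rho0)
    by (unfold y1, y2; rewrite sdist_mulv_orthogonal; auto).
  repeat split.
  - rewrite <- Dy; apply sdist_reverse_triangle; auto.
  - rewrite <- Dx, (sdist_sym x1 y1), (sdist_sym x2 y1); apply sdist_reverse_triangle; auto.
  - rewrite <- Dx, (sdist_sym x1 x2), (sdist_sym x2 y2), (sdist_sym x1 y2);
      apply sdist_reverse_triangle; auto.
  - rewrite <- Dy, (sdist_sym y1 y2); apply sdist_reverse_triangle; auto.
Qed.

Lemma ceilR_spec (x : R) : IZR (ceilR x) - 1 < x <= IZR (ceilR x).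
Proof. unfold ceilR; rewrite opp_IZR; pose proof (base_Int_part (- x)); lra. Qed.

Lemma Zle_of_IZR_lt_succ (m n : Z) : IZR m < IZR n + 1 -> (m <= n)%Z.
Proof. intro H; rewrite <- plus_IZR in H; apply lt_IZR in H; lia. Qed.

Lemma barD_barL_adjacent (r L D : R) : 0 < r -> Rabs (L - D) <= 2 * r ->
  barD r D = (barL r L - 1)%Z \/ barD r D = (barL r L + 1)%Z.
Proof.
  intros Hr HLD.
  assert (HLD_between : -(2 * r) <= L - D <= 2 * r) by (split_Rabs; lra).
  set (X := L / (4 * r)); set (Y := D / (4 * r) - 1 / 2).
  assert (HYX : Y <= X)
    by (unfold X, Y; apply Rmult_le_reg_r with (4 * r); field_simplify; lra).
  assert (HXY : X <= Y + 1)
    by (unfold X, Y; apply Rmult_le_reg_r with (4 * r); field_simplify; lra).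
  pose proof (ceilR_spec X); pose proof (ceilR_spec Y).
  assert (Hlo : (ceilR X - 1 <= ceilR Y)%Z)
    by (apply Zle_of_IZR_lt_succ; rewrite minus_IZR; lra).
  assert (Hhi : (ceilR Y <= ceilR X)%Z) by (apply Zle_of_IZR_lt_succ; lra).
  unfold barL, barD; fold X Y; lia.
Qed.

Theorem mainTheorem3 (rho0 : R) (Q : mat3) :
  0 < rho0 < PI / 2 -> SO3 Q ->
  (let bL1 := barL rho0 (L1 rho0 Q) in
   let bL2 := barL rho0 (L2 rho0 Q) in
   let bD1 := barD rho0 (D1 rho0 Q) in
   let bD2 := barD rho0 (D2 rho0 Q) in
   ((bL1 > bD1 /\ bL1 > bD2 /\ bL2 > bD1 /\ bL2 > bD2)%Z -> bL1 = bL2) /\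
   ((bD1 > bL1 /\ bD1 > bL2 /\ bD2 > bL1 /\ bD2 > bL2)%Z -> bD1 = bD2)).
Proof.
  intros Hr [HQ _].
  assert (Hr0 : 0 < rho0) by lra.
  destruct (L_D_close rho0 Q Hr HQ) as (H11 & H12 & H21 & H22).
  pose proof (barD_barL_adjacent _ _ _ Hr0 H11); pose proof (barD_barL_adjacent _ _ _ Hr0 H12).
  pose proof (barD_barL_adjacent _ _ _ Hr0 H21); pose proof (barD_barL_adjacent _ _ _ Hr0 H22).
  cbv zeta; split; intros; lia.
Qed.
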